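(* Let $A$ and $B$ be self-adjoint operators on the same complex Hilbert space, with $B$ bounded, non-negative and $B \neq 0$. If $\lambda\in\mathbb{R}$ is an accumulation point of $\mathbb{R} \setminus \bigcup_{t\in\mathbb{R}} \sigma(A+tB)$, then $\lambda \in \sigma(A+tB)$ for all $t \in \mathbb{R}$. In particular, $\mathbb{R} \setminus \bigcup_{t\in\mathbb{R}} \sigma(A+tB)$ contains none of its accumulation points.
   Context: $\sigma(T)$ denotes the spectrum of an operator $T$. $A$ may be unbounded; $A+tB$ is defined on the domain of $A$. *)

From mathcomp Require Import all_boot all_algebra.
From mathcomp Require Import reals.
From mathcomp Require Export complex.
Set Implicit Arguments. Unset Strict Implicit. Unset Printing Implicit Defensive.
Import GRing.Theory Num.Theory.
Local Open Scope ring_scope.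
Local Open Scope complex_scope.

Section Hilbert.
Variables (R : realType) (H : lmodType R[i]).

Definition inner_product (ip : H -> H -> R[i]) : Prop :=
  [/\ forall (a : R[i]) (x y z : H), ip (a *: x + y) z = a * ip x z + ip y z,
      forall x y : H, ip y x = (ip x y)^*,
      forall x : H, 0 <= ip x x
    & forall x : H, ip x x = 0 -> x = 0].

Definition hnorm (ip : H -> H -> R[i]) (x : H) : R := Num.sqrt (complex.Re (ip x x)).

Definition norm_complete (ip : H -> H -> R[i]) : Prop :=
  forall u : nat -> H,
    (forall e : R, 0 < e -> exists N : nat, forall m n : nat,
        (N <= m)%N -> (N <= n)%N -> hnorm ip (u m - u n) < e) ->
    exists l : H, forall e : R, 0 < e -> exists N : nat, forall n : nat,
        (N <= n)%N -> hnorm ip (u n - l) < e.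

Definition is_hilbert (ip : H -> H -> R[i]) : Prop :=
  inner_product ip /\ norm_complete ip.

Definition lin_op_on (D : H -> Prop) (T : H -> H) : Prop :=
  [/\ D 0,
      forall (a : R[i]) (x y : H), D x -> D y -> D (a *: x + y)
    & forall (a : R[i]) (x y : H), D x -> D y -> T (a *: x + y) = a *: T x + T y].

Definition dense (ip : H -> H -> R[i]) (D : H -> Prop) : Prop :=
  forall (x : H) (e : R), 0 < e -> exists d : H, D d /\ hnorm ip (x - d) < e.

(* T (with domain D) is self-adjoint: densely defined, T* = T, i.e.
   dom(T* ) = { y | exists z, forall x in D, <T x, y> = <x, z> } equals D
   and T* y = T y on D. *)
Definition self_adjoint (ip : H -> H -> R[i]) (D : H -> Prop) (T : H -> H) : Prop :=
  [/\ lin_op_on D T, dense ip D,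
      forall x y : H, D x -> D y -> ip (T x) y = ip x (T y)
    & forall y : H, (exists z : H, forall x : H, D x -> ip (T x) y = ip x z) -> D y].

Definition bounded_op (ip : H -> H -> R[i]) (T : H -> H) : Prop :=
  exists C : R, forall x : H, hnorm ip (T x) <= C * hnorm ip x.

Definition resolvent (ip : H -> H -> R[i]) (D : H -> Prop) (T : H -> H)
    (lam : R[i]) : Prop :=
  exists S : H -> H,
    [/\ forall y : H, D (S y) /\ T (S y) - lam *: S y = y,
        forall x : H, D x -> S (T x - lam *: x) = x
      & bounded_op ip S].

Definition spectrum (ip : H -> H -> R[i]) (D : H -> Prop) (T : H -> H)
    (lam : R[i]) : Prop := ~ resolvent ip D T lam.

End Hilbert.

(* Let lambda be a limit of points mu at which every A + tB - mu is invertible,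
   and suppose A + t0 B - lambda has a bounded inverse J.  For such mu near
   lambda, the inverse K of A + t0 B - mu satisfies <K B u, B u> = 0 for all u:
   invertibility of A + (t0 + s) B - mu for every real s makes
   1 + s B^(1/2) K B^(1/2) bounded below for all s, which forces the symmetric
   operator B^(1/2) K B^(1/2) to vanish (otherwise the supremum m of
   <K B u, B u> / <B u, u> is an approximate eigenvalue, contradicting
   s = -1/m).  Expanding K = J + (mu - lambda) K J twice and letting
   mu -> lambda, the linear coefficient <J^2 y, y> = |J y|^2 of y = B u must
   vanish, so B u = (A + t0 B - lambda) J y = 0 for every u. *)

From mathcomp Require Import all_boot all_algebra.
From mathcomp Require Import boolp classical_sets reals complex ring lra.
Set Implicit Arguments.
Unset Strict Implicit.
Unset Printing Implicit Defensive.
Import order.Order.TTheory GRing.Theory Num.Theory.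
Local Open Scope ring_scope.
Local Open Scope complex_scope.

Lemma discriminant_le (R : realFieldType) (a b c : R) : 0 <= c ->
  (forall r, 0 <= a + 2 * r * b + r ^+ 2 * c) -> b ^+ 2 <= a * c.
Proof.
move=> c_ge0; have [->|c_neq0] := eqVneq c 0 => quad_ge0.
  have [->|b_neq0] := eqVneq b 0; first by rewrite expr0n mulr0.
  have := quad_ge0 (- (a + 1) / (2 * b)); rewrite mulr0.
  have -> : 2 * (- (a + 1) / (2 * b)) * b = - (a + 1) by field.
  lra.
have c_gt0 : 0 < c by rewrite lt0r c_neq0.
have := quad_ge0 (- b / c).
have -> : (- b / c) ^+ 2 * c = b ^+ 2 / c by field.
have -> : 2 * (- b / c) * b = - 2 * (b ^+ 2 / c) by field.
move=> h; have : b ^+ 2 / c <= a by lra.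
by rewrite ler_pdivrMr // mulrC.
Qed.

Lemma le0_of_le_small (R : realFieldType) (X K e0 : R) : 0 < e0 ->
  (forall e, 0 < e -> e <= e0 -> X <= e * K) -> X <= 0.
Proof.
move=> e0_gt0 X_small; rewrite leNgt; apply/negP => X_gt0.
have K_gt0 : 0 < K.
  by have := X_small e0 e0_gt0 (lexx _); rewrite -(pmulr_rgt0 _ e0_gt0); lra.
pose e := Num.min e0 (X / (2 * K)).
have e_gt0 : 0 < e by rewrite lt_min e0_gt0 divr_gt0 ?mulr_gt0.
have eK : e * K <= X / 2.
  have : e <= X / (2 * K) by rewrite ge_min lexx orbT.
  by rewrite -ler_pdivlMr // => h; apply: (le_trans h); rewrite invfM mulrA.
have e_le : e <= e0 by rewrite ge_min lexx.
by have := X_small e e_gt0 e_le; lra.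
Qed.

Lemma small_roots_lin_coef_eq0 (R : realFieldType) (a b M : R) :
  (forall e, 0 < e -> exists d c : R,
     [/\ d != 0, `|d| < e, c ^+ 2 <= M & a + d * b + d ^+ 2 * c = 0]) -> b = 0.
Proof.
move=> small_roots.
have sq_small (e d : R) : `|d| < e -> e <= 1 -> d ^+ 2 <= e.
  move=> d_lt e_le1; rewrite -real_normK ?num_real //.
  have := normr_ge0 d; nra.
have M_ge0 : 0 <= M.
  by have [d [c [_ _ + _]]] := small_roots 1 ltr01; apply: le_trans; apply: sqr_ge0.
have a0 : a = 0.
  apply/eqP; rewrite -sqrf_eq0 eq_le sqr_ge0 andbT.
  apply: (@le0_of_le_small _ _ (2 * (b ^+ 2 + M)) 1) => // e e_gt0 e_le1.
  have [d [c [_ d_lt c_le root]]] := small_roots e e_gt0.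
  have d2_le := sq_small e d d_lt e_le1.
  have -> : a = - d * (b + d * c) by rewrite -[a]subr0 -root; ring.
  have dc_le : (d * c) ^+ 2 <= M.
    rewrite exprMn; apply: le_trans c_le; rewrite ler_piMl ?sqr_ge0 //; lra.
  have := sqr_ge0 (b - d * c); have := sqr_ge0 d; nra.
apply/eqP; rewrite -sqrf_eq0 eq_le sqr_ge0 andbT.
apply: (@le0_of_le_small _ _ M 1) => // e e_gt0 e_le1.
have [d [c [d_neq0 d_lt c_le root]]] := small_roots e e_gt0.
have d2_le := sq_small e d d_lt e_le1.
have -> : b = - d * c.
  apply: (mulfI d_neq0); rewrite -[d * b]add0r -a0; apply/eqP.
  by rewrite -subr_eq0 -root; apply/eqP; ring.
have := sqr_ge0 d; have := sqr_ge0 c; nra.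
Qed.

Lemma exists_sup_ratio (R : realType) (T : Type) (f g : T -> R) (c : R) (u0 : T) :
  (forall u, 0 <= g u) -> (forall u, f u <= c * g u) -> 0 < f u0 ->
  exists2 m, 0 < m & (forall u, f u <= m * g u) /\
    (forall e, 0 < e -> exists u, 0 < g u /\ (m - e) * g u < f u).
Proof.
move=> g_ge0 f_le fu0_gt0.
have g_gt0 u : 0 < f u -> 0 < g u.
  move=> fu_gt0; rewrite lt0r g_ge0 andbT; apply: contraTneq fu_gt0 => gu0.
  by rewrite -leNgt (le_trans (f_le u)) // gu0 mulr0.
pose E x := exists2 u, 0 < g u & x = f u / g u.
have supE : has_sup E.
  split; first by exists (f u0 / g u0); exists u0; last by []; apply: g_gt0.
  by exists c => _ [u gu_gt0 ->]; rewrite ler_pdivrMr.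
exists (sup E); [|split].
- apply: lt_le_trans (sup_upper_bound supE _); last by exists u0; first exact: g_gt0.
  by rewrite divr_gt0 ?g_gt0.
- move=> u; have [gu0|gu_neq0] := eqVneq (g u) 0.
    by have := f_le u; rewrite gu0 !mulr0.
  have gu_gt0 : 0 < g u by rewrite lt0r gu_neq0 g_ge0.
  by rewrite -ler_pdivrMr //; apply: sup_upper_bound => //; exists u.
- move=> e e_gt0; have [_ [u gu_gt0 ->] lt_fg] := sup_adherent e_gt0 supE.
  by exists u; rewrite -ltr_pdivlMr.
Qed.

Section InnerProduct.
Variables (R : realType) (H : lmodType R[i]) (ip : H -> H -> R[i]).
Hypothesis ip_inner : inner_product ip.

Definition re_ip (x y : H) : R := complex.Re (ip x y).
Definition sqnorm (x : H) : R := re_ip x x.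

Definition rlinear (L : H -> H) :=
  forall (r : R) x y, L (r%:C *: x + y) = r%:C *: L x + L y.
Definition re_symmetric (L : H -> H) := forall x y, re_ip (L x) y = re_ip x (L y).
Definition re_nonneg (L : H -> H) := forall x, 0 <= re_ip (L x) x.
Definition op_bound (L : H -> H) (c : R) := forall x, sqnorm (L x) <= c ^+ 2 * sqnorm x.

Lemma ipDl x y z : ip (x + y) z = ip x z + ip y z.
Proof. by case: ip_inner => ip_lin _ _ _; rewrite -[x]scale1r ip_lin mul1r scale1r. Qed.

Lemma ipZl a x z : ip (a *: x) z = a * ip x z.
Proof.
case: ip_inner => ip_lin _ _ _; have ip0 : ip 0 z = 0.
  by apply: (addrI (ip 0 z)); rewrite -ipDl !addr0.
by rewrite -[a *: x]addr0 ip_lin ip0 addr0.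
Qed.

Lemma re_ipDl x y z : re_ip (x + y) z = re_ip x z + re_ip y z.
Proof. by rewrite /re_ip ipDl; case: (ip x z); case: (ip y z). Qed.

Lemma re_ipZl (r : R) x z : re_ip (r%:C *: x) z = r * re_ip x z.
Proof. by rewrite /re_ip ipZl; case: (ip x z) => a b /=; rewrite mul0r subr0. Qed.

Lemma re_ipC x y : re_ip x y = re_ip y x.
Proof. by case: ip_inner => _ ip_conj _ _; rewrite /re_ip ip_conj; case: (ip y x). Qed.

Lemma re_ipNl x z : re_ip (- x) z = - re_ip x z.
Proof. by have := re_ipZl (-1) x z; rewrite rmorphN1 scaleN1r mulN1r. Qed.

Lemma re_ipBl x y z : re_ip (x - y) z = re_ip x z - re_ip y z.
Proof. by rewrite re_ipDl re_ipNl. Qed.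

Lemma re_ipDr x y z : re_ip z (x + y) = re_ip z x + re_ip z y.
Proof. by rewrite re_ipC re_ipDl !(re_ipC z). Qed.

Lemma re_ipZr (r : R) x z : re_ip z (r%:C *: x) = r * re_ip z x.
Proof. by rewrite re_ipC re_ipZl re_ipC. Qed.

Lemma re_ipNr x z : re_ip z (- x) = - re_ip z x.
Proof. by rewrite re_ipC re_ipNl re_ipC. Qed.

Lemma re_ipBr x y z : re_ip z (x - y) = re_ip z x - re_ip z y.
Proof. by rewrite re_ipDr re_ipNr. Qed.

Lemma sqnorm_ge0 x : 0 <= sqnorm x.
Proof. by case: ip_inner => _ _ ip_ge0 _; move: (ip_ge0 x); rewrite lecE => /andP[]. Qed.

Lemma sqnorm_eq0 x : sqnorm x = 0 -> x = 0.
Proof.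
case: ip_inner => _ _ ip_ge0 ip_eq0 Re0; apply: ip_eq0.
move: (ip_ge0 x) Re0; rewrite lecE /sqnorm /re_ip.
by case: (ip x x) => a b /= /andP[/eqP -> _] ->.
Qed.

Lemma sqnormZ (r : R) x : sqnorm (r%:C *: x) = r ^+ 2 * sqnorm x.
Proof. by rewrite /sqnorm re_ipZl re_ipZr mulrA. Qed.

Lemma sqnormN x : sqnorm (- x) = sqnorm x.
Proof. by rewrite /sqnorm re_ipNl re_ipNr opprK. Qed.

Lemma sqnormB_le x y : sqnorm (x - y) <= 2 * sqnorm x + 2 * sqnorm y.
Proof.
have := sqnorm_ge0 (x + y); rewrite /sqnorm !re_ipDl !re_ipDr !re_ipNl !re_ipNr.
by rewrite (re_ipC y x); lra.
Qed.

Lemma bounded_op_bound T : bounded_op ip T -> exists2 c, 0 <= c & op_bound T c.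
Proof.
move=> [C T_le]; exists `|C| => // x.
have := T_le x; rewrite /hnorm -!/(re_ip _ _) -!/(sqnorm _) => le_sqrt.
rewrite -(sqr_sqrtr (sqnorm_ge0 x)) -(sqr_sqrtr (sqnorm_ge0 (T x))) -exprMn.
rewrite ler_sqr ?nnegrE ?mulr_ge0 ?sqrtr_ge0 //.
exact: le_trans le_sqrt (ler_wpM2r (sqrtr_ge0 _) (ler_norm C)).
Qed.

Lemma psd_CauchySchwarz L : rlinear L -> re_symmetric L -> re_nonneg L ->
  forall x y, re_ip (L x) y ^+ 2 <= re_ip (L x) x * re_ip (L y) y.
Proof.
move=> L_lin L_sym L_ge0 x y; apply: discriminant_le; first exact: L_ge0.
move=> r; have := L_ge0 (r%:C *: y + x).
rewrite L_lin re_ipDl !re_ipDr !re_ipZl !re_ipZr (L_sym y x) (re_ipC y (L x)).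
lra.
Qed.

Lemma CauchySchwarz x y : re_ip x y ^+ 2 <= sqnorm x * sqnorm y.
Proof. by apply: (@psd_CauchySchwarz id) => // z; apply: sqnorm_ge0. Qed.

Lemma norm_re_ip_le L c : 0 <= c -> op_bound L c ->
  forall x, `|re_ip (L x) x| <= c * sqnorm x.
Proof.
move=> c_ge0 L_le x; have N_ge0 := sqnorm_ge0 x.
rewrite -ler_sqr ?nnegrE ?normr_ge0 ?mulr_ge0 // real_normK ?num_real //.
apply: le_trans (CauchySchwarz _ _) _.
by rewrite exprMn expr2 mulrA; apply: ler_wpM2r.
Qed.

Section RLinear.
Variable L : H -> H.
Hypothesis L_lin : rlinear L.

Lemma rlinearD x y : L (x + y) = L x + L y.
Proof. by have := L_lin 1 x y; rewrite rmorph1 !scale1r. Qed.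

Lemma rlinear0 : L 0 = 0.
Proof. by apply: (addrI (L 0)); rewrite -rlinearD !addr0. Qed.

Lemma rlinearZ (r : R) x : L (r%:C *: x) = r%:C *: L x.
Proof. by have := L_lin r x 0; rewrite !addr0 rlinear0 addr0. Qed.

Lemma rlinearN x : L (- x) = - L x.
Proof. by have := rlinearZ (-1) x; rewrite rmorphN1 !scaleN1r. Qed.

Lemma rlinearB x y : L (x - y) = L x - L y.
Proof. by rewrite rlinearD rlinearN. Qed.

End RLinear.

Section PositiveOperator.
Context {B : H -> H} {cB : R}.
Hypotheses (B_lin : rlinear B) (B_sym : re_symmetric B) (B_ge0 : re_nonneg B).
Hypotheses (cB_ge0 : 0 <= cB) (B_le : op_bound B cB).

Lemma sqnorm_le_form u : sqnorm (B u) <= cB * re_ip (B u) u.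
Proof.
have := norm_re_ip_le cB_ge0 B_le (B u); rewrite ler_norml => /andP[_ BB_le].
have CS := psd_CauchySchwarz B_lin B_sym B_ge0 u (B u).
have q_ge0 := B_ge0 u; have N_ge0 := sqnorm_ge0 (B u).
rewrite -/(sqnorm (B u)) in CS.
set N := sqnorm (B u) in CS BB_le N_ge0 *; set q := re_ip (B u) u in CS q_ge0 *.
have [N0|N_neq0] := eqVneq N 0; first by rewrite N0 mulr_ge0.
have N_gt0 : 0 < N by rewrite lt0r N_neq0.
rewrite -(ler_pM2r N_gt0) -expr2; apply: le_trans CS _.
by rewrite mulrAC mulrC; apply: ler_wpM2r.
Qed.

Section Compression.
Context {K : H -> H} {cK : R}.
Hypotheses (K_lin : rlinear K) (K_sym : re_symmetric K).
Hypotheses (cK_ge0 : 0 <= cK) (K_le : op_bound K cK).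

(* rho u / q u ranges over the numerical range of B^(1/2) K B^(1/2). *)
Let q u := re_ip (B u) u.
Let rho u := re_ip (K (B u)) (B u).

Lemma norm_compression_le u : `|rho u| <= cK * cB * q u.
Proof.
apply: le_trans (norm_re_ip_le cK_ge0 K_le (B u)) _.
by rewrite -mulrA ler_wpM2l // sqnorm_le_form.
Qed.

Lemma sqnorm_defect_le m u : 0 <= m -> (forall x, rho x <= m * q x) ->
  sqnorm (m%:C *: B u - B (K (B u))) <= cB * (m + cK * cB) * (m * q u - rho u).
Proof.
move=> m_ge0 rho_le.
pose L x := m%:C *: B x - B (K (B x)).
have L_lin : rlinear L.
  move=> r x y; rewrite /L B_lin K_lin B_lin.
  by rewrite scalerDr scalerBr !scalerA (mulrC m%:C) opprD addrACA.
have L_sym : re_symmetric L.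
  move=> x y; rewrite /L re_ipBl re_ipBr re_ipZl re_ipZr.
  by rewrite (B_sym x y) (B_sym (K (B x)) y) K_sym (B_sym x).
have L_form x : re_ip (L x) x = m * q x - rho x.
  by rewrite /L re_ipBl re_ipZl (B_sym (K (B x))).
have L_ge0 : re_nonneg L by move=> x; rewrite L_form subr_ge0.
(* L = m B - B K B is nonnegative and L u = B v, so Cauchy-Schwarz for L
   bounds <B v, v> by the defect <L u, u>. *)
pose v := m%:C *: u - K (B u).
have Lu : L u = B v by rewrite /v rlinearB // rlinearZ.
have := psd_CauchySchwarz L_lin L_sym L_ge0 u v.
rewrite !L_form Lu -/(q v) => CS.
have qv_ge0 : 0 <= q v := B_ge0 v.
have := norm_compression_le v; rewrite ler_norml => /andP[rho_v_ge _].
have defect_ge0 : 0 <= m * q u - rho u by rewrite subr_ge0.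
have gamma_ge0 : 0 <= m + cK * cB by rewrite addr_ge0 ?mulr_ge0.
have qv_le : q v <= (m + cK * cB) * (m * q u - rho u).
  have [->|qv_neq0] := eqVneq (q v) 0; first by rewrite mulr_ge0.
  have qv_gt0 : 0 < q v by rewrite lt0r qv_neq0.
  rewrite -(ler_pM2r qv_gt0) -expr2; apply: le_trans CS _.
  have -> : (m + cK * cB) * (m * q u - rho u) * q v =
      (m * q u - rho u) * ((m + cK * cB) * q v) by ring.
  by apply: ler_wpM2l => //; lra.
rewrite -/(L u) Lu; apply: le_trans (sqnorm_le_form v) _.
by rewrite -mulrA ler_wpM2l.
Qed.

Lemma sqnorm_KB_le m C u : 0 < m -> (forall x, rho x <= m * q x) ->
  (forall x, sqnorm (K (B x)) <= C * sqnorm (B x + (- m^-1)%:C *: B (K (B x)))) ->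
  sqnorm (K (B u)) <= `|C| * m^-1 ^+ 2 * (cB * (m + cK * cB) * (m * q u - rho u)).
Proof.
move=> m_gt0 rho_le KB_le; have := KB_le u.
rewrite (_ : B u + _ = (m^-1)%:C *: (m%:C *: B u - B (K (B u)))); last first.
  rewrite scalerBr scalerA -rmorphM mulVf ?gt_eqF // rmorph1 scale1r.
  by rewrite rmorphN scaleNr.
rewrite sqnormZ => /le_trans; apply; apply: le_trans (ler_norm _) _.
rewrite normrM (ger0_norm (mulr_ge0 (sqr_ge0 _) (sqnorm_ge0 _))) -mulrA.
apply: ler_wpM2l; first exact: normr_ge0.
apply: ler_wpM2l; first exact: sqr_ge0.
exact: sqnorm_defect_le (ltW m_gt0) rho_le.
Qed.

Hypothesis K_inv : forall t : R, exists C : R, forall u,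
  sqnorm (K (B u)) <= C * sqnorm (B u + t%:C *: B (K (B u))).

Lemma compression_le0 u0 : rho u0 <= 0.
Proof.
rewrite leNgt; apply/negP => rho_u0_gt0.
have rho_le_q u : rho u <= cK * cB * q u.
  exact: le_trans (ler_norm _) (norm_compression_le u).
have [m m_gt0 [rho_le approx]] :=
  exists_sup_ratio (f := rho) (g := q) B_ge0 rho_le_q rho_u0_gt0.
have [C KB_le] := K_inv (- m^-1).
pose k := `|C| * m^-1 ^+ 2 * (cB * (m + cK * cB)) * cB.
have gamma_ge0 : 0 <= cB * (m + cK * cB).
  by apply: mulr_ge0 => //; apply: addr_ge0; [exact: ltW | exact: mulr_ge0].
have : (m / 2) ^+ 2 <= 0.
  apply: (@le0_of_le_small _ _ k (m / 2)); first by rewrite divr_gt0.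
  move=> e e_gt0 e_le; have [u [qu_gt0 rho_gt]] := approx e e_gt0.
  have defect_le_e : m * q u - rho u <= e * q u by move: rho_gt; rewrite mulrBl; lra.
  have rho_ge : m / 2 * q u <= rho u.
    by apply: le_trans (ltW rho_gt); rewrite ler_wpM2r ?B_ge0 //; lra.
  have rho2_le : rho u ^+ 2 <= sqnorm (K (B u)) * (cB * q u).
    apply: le_trans (CauchySchwarz _ _) _.
    by apply: ler_wpM2l; [exact: sqnorm_ge0 | exact: sqnorm_le_form].
  have KBu_le : sqnorm (K (B u)) <=
      `|C| * m^-1 ^+ 2 * (cB * (m + cK * cB) * (e * q u)).
    apply: le_trans (sqnorm_KB_le u m_gt0 rho_le KB_le) _.
    apply: ler_wpM2l; first by apply: mulr_ge0; [exact: normr_ge0 | exact: sqr_ge0].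
    exact: ler_wpM2l.
  have : (m / 2 * q u) ^+ 2 <= k * e * q u ^+ 2.
    apply: le_trans (_ : rho u ^+ 2 <= _).
      have : 0 <= m / 2 * q u by rewrite mulr_ge0 ?divr_ge0 ?(ltW m_gt0) ?(ltW qu_gt0).
      by move: rho_ge; nra.
    apply: le_trans rho2_le _.
    have -> : k * e * q u ^+ 2 =
        `|C| * m^-1 ^+ 2 * (cB * (m + cK * cB) * (e * q u)) * (cB * q u).
      by rewrite /k; ring.
    by apply: ler_wpM2r => //; rewrite mulr_ge0 // ltW.
  by rewrite exprMn ler_pM2r ?exprn_gt0 // [e * k]mulrC.
by rewrite leNgt exprn_gt0 ?divr_gt0.
Qed.

End Compression.

Lemma compression_eq0 K cK :
  rlinear K -> re_symmetric K -> 0 <= cK -> op_bound K cK ->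
  (forall t : R, exists C : R, forall u,
     sqnorm (K (B u)) <= C * sqnorm (B u + t%:C *: B (K (B u)))) ->
  forall u, re_ip (K (B u)) (B u) = 0.
Proof.
move=> K_lin K_sym cK_ge0 K_le K_inv u.
apply/eqP; rewrite eq_le (compression_le0 K_lin K_sym cK_ge0 K_le K_inv) /=.
have NK_lin : rlinear (fun x => - K x) by move=> r x y; rewrite K_lin opprD scalerN.
have NK_sym : re_symmetric (fun x => - K x).
  by move=> x y; rewrite re_ipNl re_ipNr K_sym.
have NK_le : op_bound (fun x => - K x) cK by move=> x; rewrite sqnormN.
have NK_inv : forall t : R, exists C : R, forall u,
    sqnorm (- K (B u)) <= C * sqnorm (B u + t%:C *: B (- K (B u))).
  move=> t; have [C KB_le] := K_inv (- t); exists C => w.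
  by rewrite sqnormN (rlinearN B_lin) scalerN -scaleNr -rmorphN.
by have := compression_le0 NK_lin NK_sym cK_ge0 NK_le NK_inv u; rewrite re_ipNl oppr_le0.
Qed.

End PositiveOperator.

Lemma lin_op_rlinear L : lin_op_on (fun _ => True) L -> rlinear L.
Proof. by case=> _ _ L_comb r x y; apply: L_comb. Qed.

Definition shift_op (T : H -> H) (mu : R) x := T x - mu%:C *: x.

Lemma shift_op_shift T mu nu x : shift_op T mu x = shift_op T nu x - (mu - nu)%:C *: x.
Proof. by rewrite /shift_op rmorphB scalerBl opprB addrA subrK. Qed.

Section Inverse.
Variables (D : H -> Prop) (T : H -> H).
Hypotheses (T_lin : lin_op_on D T)
  (T_sym : forall x y, D x -> D y -> re_ip (T x) y = re_ip x (T y)).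

Lemma shift_op_comb mu a x y : D x -> D y ->
  shift_op T mu (a *: x + y) = a *: shift_op T mu x + shift_op T mu y.
Proof.
case: T_lin => _ _ T_comb Dx Dy; rewrite /shift_op T_comb //.
by rewrite scalerDr scalerBr !scalerA (mulrC a) opprD addrACA.
Qed.

Lemma shift_op0 mu : shift_op T mu 0 = 0.
Proof.
case: T_lin => D0 _ T_comb; rewrite /shift_op scaler0 subr0.
have := T_comb 1 0 0 D0 D0; rewrite !scale1r !addr0 -{1}[T 0]addr0.
by move/addrI/esym.
Qed.

Section OneInverse.
Variables (mu : R) (S : H -> H).
Hypotheses (S_right : forall y, D (S y) /\ shift_op T mu (S y) = y)
  (S_left : forall x, D x -> S (shift_op T mu x) = x).

Lemma inverse_rlinear : rlinear S.
Proof.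
case: T_lin => _ D_comb _ r x y.
have [Dx Sx] := S_right x; have [Dy Sy] := S_right y.
by rewrite -{1}Sx -{1}Sy -shift_op_comb // S_left //; apply: D_comb.
Qed.

Lemma inverse_sym : re_symmetric S.
Proof.
move=> x y; have [Dx Sx] := S_right x; have [Dy Sy] := S_right y.
by rewrite -{1}Sy -{2}Sx /shift_op re_ipBr re_ipBl re_ipZr re_ipZl T_sym.
Qed.

End OneInverse.

Lemma resolvent_identity lam mu J K :
  (forall y, D (J y) /\ shift_op T lam (J y) = y) ->
  (forall x, D x -> K (shift_op T mu x) = x) -> rlinear K ->
  forall z, K z = J z + (mu - lam)%:C *: K (J z).
Proof.
move=> J_right K_left K_lin z; have [DJz Jz] := J_right z.
have := K_left _ DJz; rewrite (shift_op_shift _ mu lam) Jz.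
by rewrite (rlinearB K_lin) (rlinearZ K_lin) => KJz; rewrite -{1}KJz subrK.
Qed.

Lemma resolvent_near_bound lam mu J K cJ :
  (forall x, D x -> J (shift_op T lam x) = x) -> 0 <= cJ -> op_bound J cJ ->
  (forall y, D (K y) /\ shift_op T mu (K y) = y) ->
  2 * cJ * `|lam - mu| <= 1 -> op_bound K (2 * cJ).
Proof.
move=> J_left cJ_ge0 J_le K_right near z; have [DKz Kz] := K_right z.
have := J_le (shift_op T lam (K z)); rewrite J_left // (shift_op_shift _ lam mu) Kz.
have := sqnormB_le z ((lam - mu)%:C *: K z); rewrite sqnormZ.
have := sqnorm_ge0 (K z); have := sqnorm_ge0 z.
have small : cJ ^+ 2 * (lam - mu) ^+ 2 <= 1 / 4.
  rewrite -[(lam - mu) ^+ 2]real_normK ?num_real // -exprMn.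
  have : 0 <= cJ * `|lam - mu| by rewrite mulr_ge0.
  move: near; rewrite -mulrA; set a := cJ * _; nra.
set N := sqnorm (K z); set Z := sqnorm z; set W := sqnorm _ => Z_ge0 N_ge0 W_le N_le.
have : cJ ^+ 2 * W <= 2 * cJ ^+ 2 * Z + 2 * (cJ ^+ 2 * (lam - mu) ^+ 2) * N.
  have := sqr_ge0 cJ; nra.
have : cJ ^+ 2 * (lam - mu) ^+ 2 * N <= 1 / 4 * N by apply: ler_wpM2r.
rewrite exprMn; lra.
Qed.

End Inverse.

Definition pencil (A B : H -> H) (t : R) x := A x + t%:C *: B x.

Section Pencil.
Variables (D : H -> Prop) (A B : H -> H).
Hypotheses (A_lin : lin_op_on D A)
  (A_sym : forall x y, D x -> D y -> ip (A x) y = ip x (A y)).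
Hypotheses (B_lin : lin_op_on (fun _ => True) B)
  (B_sym : forall x y, ip (B x) y = ip x (B y))
  (B_ge0 : forall x, 0 <= ip (B x) x) (B_bd : bounded_op ip B).

Let B_rlin : rlinear B. Proof. exact: lin_op_rlinear. Qed.
Let B_resym : re_symmetric B. Proof. by move=> x y; rewrite /re_ip B_sym. Qed.
Let B_re_ge0 : re_nonneg B.
Proof. by move=> x; move: (B_ge0 x); rewrite lecE => /andP[]. Qed.

Lemma pencil_lin t : lin_op_on D (pencil A B t).
Proof.
case: A_lin B_lin => D0 D_comb A_comb [_ _ B_comb]; split => // a x y Dx Dy.
rewrite /pencil A_comb // B_comb // !scalerDr !scalerA (mulrC t%:C).
by rewrite addrACA.
Qed.

Lemma pencil_sym t x y : D x -> D y ->
  re_ip (pencil A B t x) y = re_ip x (pencil A B t y).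
Proof.
move=> Dx Dy; rewrite /pencil re_ipDl re_ipDr re_ipZl re_ipZr B_resym.
by rewrite {1}/re_ip A_sym.
Qed.

Lemma shift_pencilD t s mu x :
  shift_op (pencil A B (t + s)) mu x = shift_op (pencil A B t) mu x + s%:C *: B x.
Proof. by rewrite /shift_op /pencil rmorphD scalerDl addrA (addrAC _ (s%:C *: _)). Qed.

Lemma pencil_compression_eq0 mu t0 K :
  (forall t, resolvent ip D (pencil A B t) mu%:C) ->
  (forall y, D (K y) /\ shift_op (pencil A B t0) mu (K y) = y) ->
  (forall x, D x -> K (shift_op (pencil A B t0) mu x) = x) -> bounded_op ip K ->
  forall u, re_ip (K (B u)) (B u) = 0.
Proof.
move=> res K_right K_left /bounded_op_bound [cK cK_ge0 K_le].
have [cB cB_ge0 B_le] := bounded_op_bound B_bd.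
have K_lin := inverse_rlinear (pencil_lin t0) K_right K_left.
have K_sym := inverse_sym (pencil_sym t0) K_right.
apply: (compression_eq0 B_rlin B_resym B_re_ge0 cB_ge0 B_le K_lin K_sym cK_ge0 K_le) => s.
have [S [_ S_left /bounded_op_bound [c _ S_le]]] := res (t0 + s).
exists (c ^+ 2) => u; have [DKBu KBu] := K_right (B u).
by rewrite -{1}(S_left _ DKBu) -/(shift_op _ mu _) shift_pencilD KBu.
Qed.

Lemma pencil_B_eq0 lam t0 :
  (forall e, 0 < e -> exists mu : R,
     (forall t, resolvent ip D (pencil A B t) mu%:C) /\ mu != lam /\ `|mu - lam| < e) ->
  resolvent ip D (pencil A B t0) lam%:C -> forall u, B u = 0.
Proof.
move=> acc [J [J_right J_left /bounded_op_bound [cJ cJ_ge0 J_le]]] u.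
set y := B u.
have JJy0 : re_ip (J (J y)) y = 0.
  apply: (small_roots_lin_coef_eq0 (a := re_ip (J y) y)
    (M := (2 * cJ) ^+ 2 * sqnorm (J (J y)) * sqnorm y)) => e e_gt0.
  have eta_gt0 : 0 < Num.min e (2 * cJ + 1)^-1.
    by rewrite lt_min e_gt0 invr_gt0 ltr_wpDl ?mulr_ge0.
  have [mu [mu_res [mu_neq mu_near]]] := acc _ eta_gt0.
  have [K [K_right K_left K_bd]] := mu_res t0.
  have K_lin := inverse_rlinear (pencil_lin t0) K_right K_left.
  have K_le : op_bound K (2 * cJ).
    apply: (resolvent_near_bound J_left cJ_ge0 J_le K_right).
    have : `|mu - lam| * (2 * cJ + 1) < 1.
      rewrite -ltr_pdivlMr ?mul1r ?ltr_wpDl ?mulr_ge0 //.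
      by rewrite (lt_le_trans mu_near) // ge_min lexx orbT.
    by rewrite distrC; have := normr_ge0 (mu - lam); nra.
  have KJ := resolvent_identity J_right K_left K_lin.
  (* <K y, y> = 0 expands to a + d b + d^2 c with d = mu - lam. *)
  exists (mu - lam), (re_ip (K (J (J y))) y); split.
  - by rewrite subr_eq0.
  - by apply: lt_le_trans mu_near _; rewrite ge_min lexx.
  - apply: le_trans (CauchySchwarz _ _) _.
    by apply: ler_wpM2r; [exact: sqnorm_ge0 | exact: K_le].
  - have := pencil_compression_eq0 mu_res K_right K_left K_bd u.
    by rewrite -/y KJ re_ipDl re_ipZl KJ re_ipDl re_ipZl => <-; ring.
have : sqnorm (J y) = 0 by rewrite /sqnorm -(inverse_sym (pencil_sym t0) J_right).
move/sqnorm_eq0 => Jy0; have [_ <-] := J_right y.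
by rewrite Jy0; apply: (shift_op0 (pencil_lin t0)).
Qed.

End Pencil.

End InnerProduct.

Theorem lemma2p8 (R : realType) (H : lmodType R[i]) (ip : H -> H -> R[i])
    (D : H -> Prop) (A B : H -> H) :
  is_hilbert ip ->
  self_adjoint ip D A ->
  self_adjoint ip (fun _ => True) B ->
  bounded_op ip B ->
  (forall x : H, 0 <= ip (B x) x) ->
  (exists x : H, B x <> 0) ->
  let G := fun mu : R =>
    forall t : R, ~ spectrum ip D (fun x => A x + t%:C *: B x) mu%:C in
  let acc := fun lam : R =>
    forall e : R, 0 < e -> exists mu : R, G mu /\ mu != lam /\ `|mu - lam| < e in
  (forall lam : R, acc lam ->
     forall t : R, spectrum ip D (fun x => A x + t%:C *: B x) lam%:C) /\
  (forall lam : R, acc lam -> ~ G lam).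
Proof.
move=> [ip_inner _] [A_lin _ A_sym _] [B_lin _ B_sym _] B_bd B_ge0 [x0 Bx0_neq0] G acc.
have acc_spectrum lam : acc lam ->
    forall t, spectrum ip D (fun x => A x + t%:C *: B x) lam%:C.
  move=> lam_acc t0 lam_res; apply: Bx0_neq0.
  have B_sym' u v : ip (B u) v = ip u (B v) by apply: B_sym.
  apply: (pencil_B_eq0 ip_inner A_lin A_sym B_lin B_sym' B_ge0 B_bd _ lam_res).
  move=> e e_gt0; have [mu [G_mu mu_near]] := lam_acc e e_gt0.
  by exists mu; split => // t; apply: contrapT; apply: G_mu.
by split=> // lam lam_acc G_lam; apply: (G_lam 0); apply: acc_spectrum.
Qed.
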